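(* Let $\mathbb{B}$ be a finitely complete category and $\chi:\mathbb{D}\to\mathbb{E}$ a notion of structure on a fibration $q:\mathbb{E}\to\mathbb{B}$. Then $\chi$ is definable if and only if there exist fibred functors $\operatorname{Cart}(\mathbb{D})\to\operatorname{Cart}(\mathbb{B}^\to_\bullet)$ and $\zeta:\operatorname{Cart}(\mathbb{E})\to\operatorname{Cart}(\mathbb{B}^\to)$ over $\mathbb{B}$ making the square with $\operatorname{Cart}(\chi):\operatorname{Cart}(\mathbb{D})\to\operatorname{Cart}(\mathbb{E})$ and the forgetful functor $\operatorname{Cart}(\mathbb{B}^\to_\bullet)\to\operatorname{Cart}(\mathbb{B}^\to)$ a strict pullback of categories.
   Context: $\mathbb{B}^\to\to\mathbb{B}$ is the codomain fibration (cartesian maps = pullback squares). $\mathbb{B}^\to_\bullet$ is the category of morphisms $f:X\to I$ of $\mathbb{B}$ equipped with a section, with morphisms the commutative squares compatible with sections, fibred over $\mathbb{B}$ via the codomain. For a fibration $\mathbb{F}$, $\operatorname{Cart}(\mathbb{F})$ is the wide subcategory of cartesian morphisms (again fibred over $\mathbb{B}$). A notion of structure on $q$ is a fibration $p:\mathbb{D}\to\mathbb{B}$ with a functor $\chi:\mathbb{D}\to\mathbb{E}$, $q\circ\chi=p$, preserving cartesian morphisms, such that $\operatorname{Cart}(\chi)$ is a discrete fibration; it is definable if $\operatorname{Cart}(\chi)$ has a right adjoint as an ordinary functor. *)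

From Stdlib Require Import ProofIrrelevance.

(** * Categories and functors (hom-equality is Leibniz equality) *)

Record Category := {
  Ob :> Type;
  Hom : Ob -> Ob -> Type;
  idm : forall x, Hom x x;
  comp : forall x y z, Hom y z -> Hom x y -> Hom x z;
  comp_idl : forall x y (f : Hom x y), comp x y y (idm y) f = f;
  comp_idr : forall x y (f : Hom x y), comp x x y f (idm x) = f;
  comp_assoc : forall x y z w (f : Hom z w) (g : Hom y z) (h : Hom x y),
      comp x y w (comp y z w f g) h = comp x z w f (comp x y z g h) }.
Arguments Hom {c} x y.
Arguments idm {c} x.
Arguments comp {c x y z} f g.

Record Functor (C D : Category) := {
  fobj :> C -> D;
  fmap : forall x y : C, Hom x y -> Hom (fobj x) (fobj y);
  fmap_id : forall x, fmap x x (idm x) = idm (fobj x);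
  fmap_comp : forall x y z (f : Hom y z) (g : Hom x y),
      fmap x z (comp f g) = comp (fmap y z f) (fmap x y g) }.
Arguments fobj {C D} f0 x.
Arguments fmap {C D} f0 {x y} _.

Definition Fcomp {C D E : Category} (G : Functor D E) (F : Functor C D) : Functor C E.
Proof.
  refine {| fobj := fun x => fobj G (fobj F x);
            fmap := fun x y f => fmap G (fmap F f) |}.
  - intros x. rewrite fmap_id. apply fmap_id.
  - intros x y z f g. rewrite fmap_comp. apply fmap_comp.
Defined.

Definition functor_eq {C D : Category} (F G : Functor C D) : Prop :=
  (forall x : C, fobj F x = fobj G x) /\
  (forall (x y : C) (f : Hom x y),
      existT (fun ab : D * D => Hom (fst ab) (snd ab)) (fobj F x, fobj F y) (fmap F f)
      = existT (fun ab : D * D => Hom (fst ab) (snd ab)) (fobj G x, fobj G y) (fmap G f)).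

(** * Cartesian morphisms and fibrations *)

Definition cartesian {E B : Category} (p : Functor E B) {x y : E} (f : Hom x y) : Prop :=
  forall (z : E) (g : Hom z y) (u : Hom (fobj p z) (fobj p x)),
    comp (fmap p f) u = fmap p g ->
    exists! h : Hom z x, comp f h = g /\ fmap p h = u.

Definition is_fibration {E B : Category} (p : Functor E B) : Prop :=
  forall (y : E) (I : B) (u : Hom I (fobj p y)),
    exists (x : E) (f : Hom x y), cartesian p f /\
      existT (fun J => Hom J (fobj p y)) (fobj p x) (fmap p f)
      = existT (fun J => Hom J (fobj p y)) I u.

Lemma cartesian_id {E B : Category} (p : Functor E B) (x : E) : cartesian p (idm x).
Proof.
  intros z g u H. rewrite fmap_id, comp_idl in H. subst u.
  exists g. split.
  - split; [apply comp_idl | reflexivity].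
  - intros h [H1 _]. rewrite comp_idl in H1. symmetry; exact H1.
Qed.

Lemma cartesian_comp {E B : Category} (p : Functor E B) {x y w : E}
  (f2 : Hom y w) (f1 : Hom x y) :
  cartesian p f2 -> cartesian p f1 -> cartesian p (comp f2 f1).
Proof.
  intros C2 C1 z g u H.
  rewrite fmap_comp, comp_assoc in H.
  destruct (C2 z g (comp (fmap p f1) u) H) as [h2 [[E2 P2] U2]].
  destruct (C1 z h2 u (eq_sym P2)) as [h1 [[E1 P1] U1]].
  exists h1. split.
  - split; [rewrite comp_assoc, E1; exact E2 | exact P1].
  - intros h [Eh Ph].
    apply U1. split; [|exact Ph].
    symmetry. apply U2. split.
    + rewrite <- comp_assoc. exact Eh.
    + rewrite fmap_comp, Ph. reflexivity.
Qed.

Lemma sig_eq_pi {A : Type} {P : A -> Prop} (a b : {x : A | P x}) :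
  proj1_sig a = proj1_sig b -> a = b.
Proof.
  destruct a as [a pa], b as [b pb]; simpl; intros ->.
  f_equal; apply proof_irrelevance.
Qed.

Definition Cart {E B : Category} (p : Functor E B) : Category.
Proof.
  refine {| Ob := Ob E;
            Hom := fun x y => {f : Hom x y | cartesian p f};
            idm := fun x => exist _ (idm x) (cartesian_id p x);
            comp := fun x y z f g =>
              exist _ (comp (proj1_sig f) (proj1_sig g))
                      (cartesian_comp p _ _ (proj2_sig f) (proj2_sig g)) |}.
  - intros; apply sig_eq_pi; simpl; apply comp_idl.
  - intros; apply sig_eq_pi; simpl; apply comp_idr.
  - intros; apply sig_eq_pi; simpl; apply comp_assoc.
Defined.

Definition Incl {E B : Category} (p : Functor E B) : Functor (Cart p) E.
Proof.
  refine {| fobj := fun x : Cart p => (x : E);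
            fmap := fun x y f => proj1_sig f |}; reflexivity.
Defined.

Definition CartProj {E B : Category} (p : Functor E B) : Functor (Cart p) B :=
  Fcomp p (Incl p).

Definition fibred_functor {A A' B : Category} (pA : Functor A B) (pA' : Functor A' B)
  (F : Functor A A') : Prop :=
  functor_eq (Fcomp pA' F) pA /\
  (forall (x y : A) (f : Hom x y), cartesian pA f -> cartesian pA' (fmap F f)).

(** * Notions of structure *)

Definition preserves_cartesian {B E D : Category} (q : Functor E B) (chi : Functor D E) : Prop :=
  forall (x y : D) (f : Hom x y), cartesian (Fcomp q chi) f -> cartesian q (fmap chi f).

Definition CartF {B E D : Category} {q : Functor E B} {chi : Functor D E}
  (H : preserves_cartesian q chi) : Functor (Cart (Fcomp q chi)) (Cart q).
Proof.
  refine {| fobj := fun x : Cart (Fcomp q chi) => (fobj chi x : Cart q);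
            fmap := fun x y f => exist _ (fmap chi (proj1_sig f)) (H _ _ _ (proj2_sig f)) |}.
  - intros; apply sig_eq_pi; simpl; apply fmap_id.
  - intros; apply sig_eq_pi; simpl; apply fmap_comp.
Defined.

Definition discrete_fibration {C D : Category} (F : Functor C D) : Prop :=
  forall (c : C) (d : D) (u : Hom d (fobj F c)),
    exists! s : {x : C & Hom x c},
      existT (fun a => Hom a (fobj F c)) (fobj F (projT1 s)) (fmap F (projT2 s))
      = existT (fun a => Hom a (fobj F c)) d u.

Definition has_right_adjoint {C D : Category} (F : Functor C D) : Prop :=
  exists (G : Functor D C) (eta : forall x : C, Hom x (fobj G (fobj F x)))
         (eps : forall y : D, Hom (fobj F (fobj G y)) y),
    (forall (x x' : C) (f : Hom x x'), comp (eta x') f = comp (fmap G (fmap F f)) (eta x)) /\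
    (forall (y y' : D) (g : Hom y y'), comp g (eps y) = comp (eps y') (fmap F (fmap G g))) /\
    (forall x : C, comp (eps (fobj F x)) (fmap F (eta x)) = idm (fobj F x)) /\
    (forall y : D, comp (fmap G (eps y)) (eta (fobj G y)) = idm (fobj G y)).

Definition is_pullback {B : Category} {P X Y Z : B}
  (p1 : Hom P X) (p2 : Hom P Y) (f : Hom X Z) (g : Hom Y Z) : Prop :=
  comp f p1 = comp g p2 /\
  forall (W : B) (a : Hom W X) (b : Hom W Y), comp f a = comp g b ->
    exists! h : Hom W P, comp p1 h = a /\ comp p2 h = b.

Definition is_terminal {B : Category} (T : B) : Prop :=
  forall X : B, exists! h : Hom X T, True.

Definition finitely_complete (B : Category) : Prop :=
  (exists T : B, is_terminal T) /\
  (forall (X Y Z : B) (f : Hom X Z) (g : Hom Y Z),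
      exists (P : B) (p1 : Hom P X) (p2 : Hom P Y), is_pullback p1 p2 f g).

(** * The arrow category B^-> and pointed arrows B^->_bullet *)

Record arr_ob (B : Category) := { a_src : B; a_tgt : B; a_map : Hom a_src a_tgt }.
Arguments a_src {B} _. Arguments a_tgt {B} _. Arguments a_map {B} _.

Definition arr_hom {B : Category} (a b : arr_ob B) : Type :=
  {st : Hom (a_src a) (a_src b) * Hom (a_tgt a) (a_tgt b) |
     comp (a_map b) (fst st) = comp (snd st) (a_map a)}.

Lemma arr_id_ok {B : Category} (a : arr_ob B) :
  comp (a_map a) (fst (idm (a_src a), idm (a_tgt a))) = comp (snd (idm (a_src a), idm (a_tgt a))) (a_map a).
Proof. simpl. rewrite comp_idl, comp_idr. reflexivity. Qed.

Definition arr_id {B : Category} (a : arr_ob B) : arr_hom a a :=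
  exist _ (idm (a_src a), idm (a_tgt a)) (arr_id_ok a).

Lemma arr_comp_ok {B : Category} {a b c : arr_ob B} (f : arr_hom b c) (g : arr_hom a b) :
  comp (a_map c) (fst (comp (fst (proj1_sig f)) (fst (proj1_sig g)),
                       comp (snd (proj1_sig f)) (snd (proj1_sig g))))
  = comp (snd (comp (fst (proj1_sig f)) (fst (proj1_sig g)),
               comp (snd (proj1_sig f)) (snd (proj1_sig g)))) (a_map a).
Proof.
  destruct f as [[f1 f2] Hf], g as [[g1 g2] Hg]; simpl in *.
  rewrite <- comp_assoc, Hf, comp_assoc, Hg, comp_assoc. reflexivity.
Qed.

Definition arr_comp {B : Category} (a b c : arr_ob B) (f : arr_hom b c) (g : arr_hom a b)
  : arr_hom a c :=
  exist _ (comp (fst (proj1_sig f)) (fst (proj1_sig g)),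
           comp (snd (proj1_sig f)) (snd (proj1_sig g))) (arr_comp_ok f g).

Definition Arrow (B : Category) : Category.
Proof.
  refine {| Ob := arr_ob B; Hom := @arr_hom B; idm := @arr_id B; comp := @arr_comp B |}.
  - intros a b [[f1 f2] Hf]; apply sig_eq_pi; simpl; rewrite !comp_idl; reflexivity.
  - intros a b [[f1 f2] Hf]; apply sig_eq_pi; simpl; rewrite !comp_idr; reflexivity.
  - intros a b c d [[f1 f2] Hf] [[g1 g2] Hg] [[h1 h2] Hh]; apply sig_eq_pi; simpl;
      rewrite !comp_assoc; reflexivity.
Defined.

Definition cod (B : Category) : Functor (Arrow B) B.
Proof.
  refine {| fobj := fun a : Arrow B => a_tgt a;
            fmap := fun a b (f : Hom a b) => snd (proj1_sig f) |}; reflexivity.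
Defined.

Record parr_ob (B : Category) := {
  pa_src : B; pa_tgt : B; pa_map : Hom pa_src pa_tgt;
  pa_sec : Hom pa_tgt pa_src;
  pa_sec_ok : comp pa_map pa_sec = idm pa_tgt }.
Arguments pa_src {B} _. Arguments pa_tgt {B} _. Arguments pa_map {B} _.
Arguments pa_sec {B} _.

Definition parr_hom {B : Category} (a b : parr_ob B) : Type :=
  {st : Hom (pa_src a) (pa_src b) * Hom (pa_tgt a) (pa_tgt b) |
     comp (pa_map b) (fst st) = comp (snd st) (pa_map a) /\
     comp (pa_sec b) (snd st) = comp (fst st) (pa_sec a)}.

Lemma parr_id_ok {B : Category} (a : parr_ob B) :
  comp (pa_map a) (fst (idm (pa_src a), idm (pa_tgt a))) = comp (snd (idm (pa_src a), idm (pa_tgt a))) (pa_map a) /\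
  comp (pa_sec a) (snd (idm (pa_src a), idm (pa_tgt a))) = comp (fst (idm (pa_src a), idm (pa_tgt a))) (pa_sec a).
Proof. simpl. rewrite !comp_idl, !comp_idr. split; reflexivity. Qed.

Definition parr_id {B : Category} (a : parr_ob B) : parr_hom a a :=
  exist _ (idm (pa_src a), idm (pa_tgt a)) (parr_id_ok a).

Lemma parr_comp_ok {B : Category} {a b c : parr_ob B} (f : parr_hom b c) (g : parr_hom a b) :
  let st := (comp (fst (proj1_sig f)) (fst (proj1_sig g)),
             comp (snd (proj1_sig f)) (snd (proj1_sig g))) in
  comp (pa_map c) (fst st) = comp (snd st) (pa_map a) /\
  comp (pa_sec c) (snd st) = comp (fst st) (pa_sec a).
Proof.
  destruct f as [[f1 f2] [Hf Hf']], g as [[g1 g2] [Hg Hg']]; simpl in *. split.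
  - rewrite <- comp_assoc, Hf, comp_assoc, Hg, comp_assoc. reflexivity.
  - rewrite <- comp_assoc, Hf', comp_assoc, Hg', comp_assoc. reflexivity.
Qed.

Definition parr_comp {B : Category} (a b c : parr_ob B) (f : parr_hom b c) (g : parr_hom a b)
  : parr_hom a c :=
  exist _ (comp (fst (proj1_sig f)) (fst (proj1_sig g)),
           comp (snd (proj1_sig f)) (snd (proj1_sig g))) (parr_comp_ok f g).

Definition PArrow (B : Category) : Category.
Proof.
  refine {| Ob := parr_ob B; Hom := @parr_hom B; idm := @parr_id B; comp := @parr_comp B |}.
  - intros a b [[f1 f2] Hf]; apply sig_eq_pi; simpl; rewrite !comp_idl; reflexivity.
  - intros a b [[f1 f2] Hf]; apply sig_eq_pi; simpl; rewrite !comp_idr; reflexivity.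
  - intros a b c d [[f1 f2] Hf] [[g1 g2] Hg] [[h1 h2] Hh]; apply sig_eq_pi; simpl;
      rewrite !comp_assoc; reflexivity.
Defined.

Definition codp (B : Category) : Functor (PArrow B) B.
Proof.
  refine {| fobj := fun a : PArrow B => pa_tgt a;
            fmap := fun a b (f : Hom a b) => snd (proj1_sig f) |}; reflexivity.
Defined.

Definition Forget (B : Category) : Functor (PArrow B) (Arrow B).
Proof.
  refine {| fobj := fun a : PArrow B =>
              ({| a_src := pa_src a; a_tgt := pa_tgt a; a_map := pa_map a |} : Arrow B);
            fmap := fun a b (f : Hom a b) =>
              (exist (fun st : Hom (pa_src a) (pa_src b) * Hom (pa_tgt a) (pa_tgt b) =>
                        comp (pa_map b) (fst st) = comp (snd st) (pa_map a))
                     (proj1_sig f) (proj1 (proj2_sig f))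
                 : @arr_hom B (Build_arr_ob B _ _ (pa_map a)) (Build_arr_ob B _ _ (pa_map b))) |};
  intros; apply sig_eq_pi; reflexivity.
Defined.

(** The square  A --K--> C, A --Phi--> P, C --Z--> X, P --V--> X  commutes
    strictly and the comparison functor from A into the (strict) pullback
    category C x_X P is an isomorphism: bijective on objects and on hom-sets. *)
Definition strict_pullback {A C P X : Category}
  (K : Functor A C) (Phi : Functor A P) (Z : Functor C X) (V : Functor P X) : Prop :=
  functor_eq (Fcomp Z K) (Fcomp V Phi) /\
  (forall (c : C) (s : P), fobj Z c = fobj V s ->
      exists! a : A, fobj K a = c /\ fobj Phi a = s) /\
  (forall (a a' : A) (g : Hom (fobj K a) (fobj K a')) (t : Hom (fobj Phi a) (fobj Phi a')),
      existT (fun xy : X * X => Hom (fst xy) (snd xy))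
             (fobj Z (fobj K a), fobj Z (fobj K a')) (fmap Z g)
      = existT (fun xy : X * X => Hom (fst xy) (snd xy))
             (fobj V (fobj Phi a), fobj V (fobj Phi a')) (fmap V t) ->
      exists! f : Hom a a', fmap K f = g /\ fmap Phi f = t).

From Stdlib Require Import ProofIrrelevance Eqdep IndefiniteDescription.

(* Write K := Cart(chi). If K has a right adjoint G with unit eta and counit
   eps, put zeta e := q(eps_e) : q(G e) -> q e and Phi d := zeta (K d) pointed by
   the section q(eta_d). The naturality squares of eps are mapped by q to
   pullbacks (lift a cone along p and transpose it), and since K is a discrete
   fibration an object or morphism of Cart(D) is determined by its K-image
   together with the section, which gives the strict pullback.
   Conversely, lift zeta e along q to a cartesian eps : e1 -> e; the pullback
   square zeta(eps) has a diagonal, a section of zeta e1, so the strict pullback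
   produces d with K d = e1. A map K x -> e factors through eps by cartesianness,
   and the factor respects the sections (compare on the pullback zeta(eps)), so it
   lifts along K: eps is a couniversal arrow. *)

(** * Cartesian morphisms and the codomain fibrations *)

Lemma cartesian_cancel {E B : Category} (p : Functor E B) {x y w : E}
  (f : Hom y w) (h : Hom x y) :
  cartesian p f -> cartesian p (comp f h) -> cartesian p h.
Proof.
  intros Cf Cfh z g u H.
  assert (H' : comp (fmap p (comp f h)) u = fmap p (comp f g)).
  { rewrite !fmap_comp, comp_assoc, H. reflexivity. }
  destruct (Cfh z (comp f g) u H') as [k [[E1 P1] U1]].
  exists k. split.
  - split; [|exact P1].
    destruct (Cf z (comp f g) (fmap p g) (eq_sym (fmap_comp _ _ p _ _ _ f g)))
      as [l [_ Ul]].
    transitivity l; [symmetry|]; apply Ul; split.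
    + rewrite <- comp_assoc. exact E1.
    + rewrite fmap_comp, P1. exact H.
    + reflexivity.
    + reflexivity.
  - intros k' [E2 P2]. apply U1. split; [|exact P2].
    rewrite comp_assoc, E2. reflexivity.
Qed.

Lemma Cart_hom_cartesian {E B : Category} (p : Functor E B) (x y : Cart p)
  (f : Hom x y) : cartesian (CartProj p) f.
Proof.
  intros z g u H. destruct f as [f Cf], g as [g Cg]. simpl in *.
  destruct (Cf z g u H) as [h [[E1 P1] U1]].
  assert (Ch : cartesian p h) by (apply (cartesian_cancel p f h Cf); rewrite E1; exact Cg).
  exists (exist _ h Ch). split.
  - split; [apply sig_eq_pi; simpl; exact E1 | exact P1].
  - intros [h' Ch'] [E2 P2]. apply sig_eq_pi; simpl.
    apply U1. split; [exact (f_equal (@proj1_sig _ _) E2) | exact P2].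
Qed.

Lemma fibration_Cart_lift {E B : Category} (p : Functor E B) (hp : is_fibration p)
  (y : Cart p) (I : B) (u : Hom I (fobj (CartProj p) y)) :
  exists (x : Cart p) (f : Hom x y),
    existT (fun J => Hom J (fobj (CartProj p) y)) (fobj (CartProj p) x) (fmap (CartProj p) f)
    = existT _ I u.
Proof.
  destruct (hp y I u) as [x [f [Cf H]]].
  exists x, (exist _ f Cf). exact H.
Qed.

Lemma discrete_fibration_faithful {C D : Category} (F : Functor C D)
  (hd : discrete_fibration F) (x c : C) (f1 f2 : Hom x c) :
  fmap F f1 = fmap F f2 -> f1 = f2.
Proof.
  intros H.
  destruct (hd c (fobj F x) (fmap F f1)) as [s [_ U]].
  assert (A1 := U (existT _ x f1) eq_refl).
  assert (A2 := U (existT _ x f2) (f_equal (existT _ (fobj F x)) (eq_sym H))).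
  rewrite A1 in A2. apply inj_pair2 in A2. exact A2.
Qed.

Lemma cod_cartesian_iff_pullback {B : Category} (a b : Arrow B) (f : Hom a b) :
  cartesian (cod B) f <->
  is_pullback (fst (proj1_sig f)) (a_map a) (a_map b) (snd (proj1_sig f)).
Proof.
  destruct f as [[top bot] Hf]; simpl in *. split.
  - intros Cf. split; [exact Hf|]. intros W x y H.
    set (z := {| a_src := W; a_tgt := W; a_map := idm W |} : Arrow B).
    assert (Hg : comp (a_map b) (fst (x, comp bot y))
                 = comp (snd (x, comp bot y)) (a_map z)).
    { simpl. rewrite comp_idr. exact H. }
    destruct (Cf z (exist _ _ Hg) y eq_refl) as [[[h1 h2] Hh] [[F1 F2] U]].
    simpl in *. subst h2.
    exists h1. split.
    + split; [exact (f_equal (fun k => fst (proj1_sig k)) F1)|].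
      rewrite Hh. apply comp_idr.
    + intros h' [G1 G2].
      assert (Hh' : comp (a_map a) (fst (h', y)) = comp (snd (h', y)) (a_map z)).
      { simpl. rewrite comp_idr. exact G2. }
      refine (f_equal (fun k => fst (proj1_sig k)) (U (exist _ _ Hh') _)).
      split; [|reflexivity]. apply sig_eq_pi; simpl. rewrite G1. reflexivity.
  - intros [_ Pb] z [[g1 g2] Hg] u H. simpl in *.
    assert (Hc : comp (a_map b) g1 = comp bot (comp u (a_map z))).
    { rewrite Hg, <- comp_assoc, H. reflexivity. }
    destruct (Pb _ g1 _ Hc) as [h [[E1 E2] U]].
    assert (Hh : comp (a_map a) (fst (h, u)) = comp (snd (h, u)) (a_map z)) by exact E2.
    exists (exist _ (h, u) Hh). split.
    + split; [apply sig_eq_pi; simpl; rewrite E1, H; reflexivity | reflexivity].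
    + intros [[h1 h2] Hh'] [F1 F2]. simpl in *. subst h2.
      apply sig_eq_pi; simpl. f_equal. apply U. split.
      * exact (f_equal (fun k => fst (proj1_sig k)) F1).
      * exact Hh'.
Qed.

Lemma codp_cartesian_of_pullback {B : Category} (a b : PArrow B) (f : Hom a b) :
  is_pullback (fst (proj1_sig f)) (pa_map a) (pa_map b) (snd (proj1_sig f)) ->
  cartesian (codp B) f.
Proof.
  destruct f as [[top bot] [Hf Hf']]; simpl in *. intros [_ Pb] z [[g1 g2] [Hg Hg']] u H.
  simpl in *.
  assert (Hc : comp (pa_map b) g1 = comp bot (comp u (pa_map z))).
  { rewrite Hg, <- comp_assoc, H. reflexivity. }
  destruct (Pb _ g1 _ Hc) as [h [[E1 E2] U]].
  (* both sides are the factorisation of (top o sec a o u, u) through the pullback *)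
  assert (Hs : comp (pa_sec a) u = comp h (pa_sec z)).
  { assert (Hc2 : comp (pa_map b) (comp top (comp (pa_sec a) u)) = comp bot u).
    { rewrite <- comp_assoc, Hf, !comp_assoc,
        <- (comp_assoc _ _ _ _ _ (pa_map a)), (pa_sec_ok _ a), comp_idl.
      reflexivity. }
    destruct (Pb _ _ _ Hc2) as [k [_ Uk]].
    transitivity k; [symmetry|]; apply Uk; split.
    - reflexivity.
    - rewrite <- comp_assoc, (pa_sec_ok _ a), comp_idl. reflexivity.
    - rewrite <- comp_assoc, E1, <- Hg', <- H, <- comp_assoc, Hf', comp_assoc.
      reflexivity.
    - rewrite <- comp_assoc, E2, comp_assoc, (pa_sec_ok _ z), comp_idr. reflexivity. }
  assert (Hh : comp (pa_map a) (fst (h, u)) = comp (snd (h, u)) (pa_map z) /\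
               comp (pa_sec a) (snd (h, u)) = comp (fst (h, u)) (pa_sec z))
    by (split; assumption).
  exists (exist _ (h, u) Hh). split.
  - split; [apply sig_eq_pi; simpl; rewrite E1, H; reflexivity | reflexivity].
  - intros [[h1 h2] [Hh1 Hh2]] [F1 F2]. simpl in *. subst h2.
    apply sig_eq_pi; simpl. f_equal. apply U. split.
    + exact (f_equal (fun k => fst (proj1_sig k)) F1).
    + exact Hh1.
Qed.

(** * Right adjoints from couniversal arrows *)

Section CouniversalArrows.
Context {C D : Category} (F : Functor C D)
  (couniversal : forall y : D, exists (r : C) (e : Hom (fobj F r) y),
      forall (x : C) (g : Hom (fobj F x) y), exists! f : Hom x r, comp e (fmap F f) = g).

Let R (y : D) : C := proj1_sig (constructive_indefinite_description _ (couniversal y)).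

Let ep (y : D) : Hom (fobj F (R y)) y :=
  proj1_sig (constructive_indefinite_description _
    (proj2_sig (constructive_indefinite_description _ (couniversal y)))).

Let ep_universal (x : C) (y : D) (g : Hom (fobj F x) y) :
  exists! f : Hom x (R y), comp (ep y) (fmap F f) = g.
Proof.
  unfold ep, R. destruct (constructive_indefinite_description _ (couniversal y)) as [r He].
  simpl. destruct (constructive_indefinite_description _ He) as [e Hu]. apply Hu.
Qed.

Let transpose (x : C) (y : D) (g : Hom (fobj F x) y) : Hom x (R y) :=
  proj1_sig (constructive_indefinite_description _ (ep_universal x y g)).

Let transpose_spec x y g : comp (ep y) (fmap F (transpose x y g)) = g.
Proof.
  unfold transpose. destruct (constructive_indefinite_description _ _) as [f Hf].
  exact (proj1 Hf).
Qed.

Let transpose_unique x y g f : comp (ep y) (fmap F f) = g -> f = transpose x y g.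
Proof.
  unfold transpose. destruct (constructive_indefinite_description _ _) as [f0 Hf0].
  simpl. intros Hf. symmetry. apply (proj2 Hf0). exact Hf.
Qed.

Let right_adjoint : Functor D C.
Proof.
  refine {| fobj := R; fmap := fun y y' h => transpose (R y) y' (comp h (ep y)) |}.
  - intros y. symmetry. apply transpose_unique.
    rewrite fmap_id, comp_idr, comp_idl. reflexivity.
  - intros y y' y'' h k. symmetry. apply transpose_unique.
    rewrite fmap_comp, <- comp_assoc, transpose_spec, comp_assoc, transpose_spec, comp_assoc.
    reflexivity.
Defined.

Lemma has_right_adjoint_of_couniversal : has_right_adjoint F.
Proof.
  exists right_adjoint, (fun x => transpose x (fobj F x) (idm _)), ep.
  split; [|split; [|split]].
  - intros x x' f. simpl.
    transitivity (transpose x (fobj F x') (fmap F f)); [|symmetry]; apply transpose_unique.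
    + rewrite fmap_comp, <- comp_assoc, transpose_spec, comp_idl. reflexivity.
    + rewrite fmap_comp, <- comp_assoc, transpose_spec, comp_assoc, transpose_spec, comp_idr.
      reflexivity.
  - intros y y' g. simpl. rewrite transpose_spec. reflexivity.
  - intros x. apply transpose_spec.
  - intros y. simpl.
    transitivity (transpose (R y) y (ep y)); [|symmetry]; apply transpose_unique.
    + rewrite fmap_comp, <- comp_assoc, transpose_spec, comp_assoc, transpose_spec, comp_idr.
      reflexivity.
    + rewrite fmap_id, comp_idr. reflexivity.
Qed.
End CouniversalArrows.

(** * From a right adjoint to a strict pullback *)

Lemma arr_map_inj {B : Category} (S T : B) (m m' : Hom S T) :
  Build_arr_ob B S T m = Build_arr_ob B S T m' -> m = m'.
Proof.
  intros H.
  assert (H' := f_equal (fun a => existT (fun st : B * B => Hom (fst st) (snd st))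
                                         (a_src a, a_tgt a) (a_map a)) H).
  simpl in H'. apply inj_pair2 in H'. exact H'.
Qed.

Lemma parr_sec_inj {B : Category} (S T : B) (m : Hom S T) (s s' : Hom T S) ok ok' :
  Build_parr_ob B S T m s ok = Build_parr_ob B S T m s' ok' -> s = s'.
Proof.
  intros H.
  assert (H' := f_equal (fun a => existT (fun st : B * B => Hom (fst st) (snd st))
                                         (pa_tgt a, pa_src a) (pa_sec a)) H).
  simpl in H'. apply inj_pair2 in H'. exact H'.
Qed.

Lemma comp_fmap_eq {C D : Category} (F : Functor C D) {x y z : C} (f : Hom y z)
  (g : Hom x y) (h : Hom (fobj F x) (fobj F z)) :
  fmap F (comp f g) = h -> comp (fmap F f) (fmap F g) = h.
Proof. rewrite fmap_comp. auto. Qed.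

Section AdjointToPullback.
Context (B E D : Category) (q : Functor E B) (chi : Functor D E)
  (hpres : preserves_cartesian q chi).
Local Notation Cp := (Cart (Fcomp q chi)).
Local Notation Cq := (Cart q).
Local Notation K := (CartF hpres).
Local Notation pp := (CartProj (Fcomp q chi)).
Local Notation pq := (CartProj q).
Context (hp : is_fibration (Fcomp q chi)) (hdisc : discrete_fibration K).
Context (G : Functor Cq Cp) (eta : forall x : Cp, Hom x (fobj G (fobj K x)))
  (eps : forall y : Cq, Hom (fobj K (fobj G y)) y)
  (eta_nat : forall (x x' : Cp) (f : Hom x x'),
      comp (eta x') f = comp (fmap G (fmap K f)) (eta x))
  (eps_nat : forall (y y' : Cq) (g : Hom y y'),
      comp g (eps y) = comp (eps y') (fmap K (fmap G g)))
  (triangle_K : forall x : Cp, comp (eps (fobj K x)) (fmap K (eta x)) = idm (fobj K x))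
  (triangle_G : forall y : Cq, comp (fmap G (eps y)) (eta (fobj G y)) = idm (fobj G y)).

Lemma transpose_eq (d : Cp) (e : Cq) (m : Hom d (fobj G e)) :
  m = comp (fmap G (comp (eps e) (fmap K m))) (eta d).
Proof.
  rewrite fmap_comp, comp_assoc, <- eta_nat, <- comp_assoc, triangle_G, comp_idl.
  reflexivity.
Qed.

Lemma unit_unique (x : Cp) (f : Hom x (fobj G (fobj K x))) :
  comp (eps (fobj K x)) (fmap K f) = idm _ -> f = eta x.
Proof. intros H. rewrite (transpose_eq _ _ f), H, fmap_id, comp_idl. reflexivity. Qed.

Lemma counit_square_commutes (e e' : Cq) (f : Hom e e') :
  comp (fmap pq (eps e')) (fmap pp (fmap G f)) = comp (fmap pq f) (fmap pq (eps e)).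
Proof.
  change (fmap pp (fmap G f)) with (fmap pq (fmap K (fmap G f))).
  apply (comp_fmap_eq pq). transitivity (fmap pq (comp f (eps e))).
  - f_equal. symmetry. apply eps_nat.
  - apply fmap_comp.
Qed.

Lemma counit_square_pullback (e e' : Cq) (f : Hom e e') :
  is_pullback (fmap pp (fmap G f)) (fmap pq (eps e)) (fmap pq (eps e')) (fmap pq f).
Proof.
  split; [apply counit_square_commutes|]. intros W x y H.
  destruct (fibration_Cart_lift _ hp (fobj G e') W x) as [d [a Ha]].
  pose proof (f_equal (@projT1 _ _) Ha) as EW; simpl in EW; subst W.
  apply inj_pair2 in Ha; subst x.
  assert (Hk : comp (fmap pq f) y = fmap pq (comp (eps e') (fmap K a))).
  { rewrite fmap_comp. symmetry. exact H. }
  destruct (Cart_hom_cartesian q _ _ f (fobj K d) _ y Hk) as [k [[Ek Pk] Uk]].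
  assert (Ga : comp (fmap G f) (comp (fmap G k) (eta d)) = a).
  { rewrite <- comp_assoc, <- fmap_comp, Ek. symmetry. apply transpose_eq. }
  exists (fmap pp (comp (fmap G k) (eta d))). split.
  - split.
    + apply (comp_fmap_eq pp). rewrite Ga. reflexivity.
    + change (fmap pp (comp (fmap G k) (eta d)))
        with (fmap pq (fmap K (comp (fmap G k) (eta d)))).
      apply (comp_fmap_eq pq). rewrite (fmap_comp _ _ K), <- comp_assoc, <- eps_nat,
        comp_assoc, triangle_K, comp_idr.
      exact Pk.
  - intros h' [H1 H2].
    destruct (Cart_hom_cartesian (Fcomp q chi) _ _ (fmap G f) d a h' H1)
      as [m [[Em Pm] _]].
    assert (Ekm : k = comp (eps e) (fmap K m)).
    { apply Uk. split.
      - rewrite <- comp_assoc, eps_nat, comp_assoc, <- fmap_comp, Em. reflexivity.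
      - rewrite fmap_comp. change (fmap pq (fmap K m)) with (fmap pp m).
        rewrite Pm. exact H2. }
    rewrite Ekm, <- transpose_eq. exact Pm.
Qed.

Definition zeta_ob (e : Cq) : Cart (cod B) :=
  Build_arr_ob B (fobj pp (fobj G e)) (fobj pq e) (fmap pq (eps e)).

Definition zeta_arr_hom (e e' : Cq) (f : Hom e e') : @arr_hom B (zeta_ob e) (zeta_ob e') :=
  exist _ (fmap pp (fmap G f), fmap pq f) (counit_square_commutes e e' f).

Definition zeta_of_adjoint : Functor Cq (Cart (cod B)).
Proof.
  refine {| fobj := zeta_ob;
            fmap := fun e e' f =>
              exist _ (zeta_arr_hom e e' f)
                (proj2 (cod_cartesian_iff_pullback (zeta_ob e) (zeta_ob e') (zeta_arr_hom e e' f))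
                   (counit_square_pullback e e' f)) |}.
  - intros e. apply sig_eq_pi, sig_eq_pi. simpl. rewrite !fmap_id. reflexivity.
  - intros x y z f g. apply sig_eq_pi, sig_eq_pi. unfold zeta_arr_hom. cbn [proj1_sig].
    rewrite !fmap_comp. reflexivity.
Defined.

Lemma unit_section (d : Cp) :
  comp (fmap pq (eps (fobj K d))) (fmap pp (eta d)) = idm (fobj pp d).
Proof.
  change (fmap pp (eta d)) with (fmap pq (fmap K (eta d))).
  apply (comp_fmap_eq pq). transitivity (fmap pq (idm (fobj K d))).
  - f_equal. apply triangle_K.
  - apply (fmap_id _ _ pq).
Qed.

Lemma unit_square_commutes (d d' : Cp) (f : Hom d d') :
  comp (fmap pp (eta d')) (fmap pp f)
  = comp (fmap pp (fmap G (fmap K f))) (fmap pp (eta d)).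
Proof.
  apply (comp_fmap_eq pp). transitivity (fmap pp (comp (fmap G (fmap K f)) (eta d))).
  - f_equal. apply eta_nat.
  - apply fmap_comp.
Qed.

Definition pointed_counit (e : Cq) (s : Hom (fobj pq e) (fobj pp (fobj G e)))
  (ok : comp (fmap pq (eps e)) s = idm (fobj pq e)) : Cart (codp B) :=
  Build_parr_ob B (fobj pp (fobj G e)) (fobj pq e) (fmap pq (eps e)) s ok.

Definition Phi_ob (d : Cp) : Cart (codp B) :=
  pointed_counit (fobj K d) (fmap pp (eta d)) (unit_section d).

Definition Phi_parr_hom (d d' : Cp) (f : Hom d d') : @parr_hom B (Phi_ob d) (Phi_ob d') :=
  exist _ (fmap pp (fmap G (fmap K f)), fmap pp f)
    (conj (counit_square_commutes _ _ (fmap K f)) (unit_square_commutes d d' f)).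

Definition Phi_of_adjoint : Functor Cp (Cart (codp B)).
Proof.
  refine {| fobj := Phi_ob;
            fmap := fun d d' f =>
              exist _ (Phi_parr_hom d d' f)
                (codp_cartesian_of_pullback (Phi_ob d) (Phi_ob d') (Phi_parr_hom d d' f)
                   (counit_square_pullback _ _ (fmap K f))) |}.
  - intros e. apply sig_eq_pi, sig_eq_pi. unfold Phi_parr_hom. cbn [proj1_sig].
    rewrite !fmap_id. reflexivity.
  - intros x y z f g. apply sig_eq_pi, sig_eq_pi. unfold Phi_parr_hom. cbn [proj1_sig].
    rewrite !fmap_comp. reflexivity.
Defined.

Lemma pointed_counit_eq (e1 e2 : Cq) s1 s2 ok1 ok2 :
  existT (fun e => Hom (fobj pq e) (fobj pp (fobj G e))) e1 s1 = existT _ e2 s2 ->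
  pointed_counit e1 s1 ok1 = pointed_counit e2 s2 ok2.
Proof.
  intros H. pose proof (f_equal (@projT1 _ _) H) as E0. cbn [projT1] in E0. subst e2.
  apply inj_pair2 in H. subst s2. f_equal. apply proof_irrelevance.
Qed.

(* A section of [zeta e] compatible with a map [k : e -> K a'] is the
   factorisation of [(eta a' o q k, id)] through a pullback, hence unique. *)
Lemma counit_section_unique (a' : Cp) (e1 e2 : Cq)
  (k1 : Hom e1 (fobj K a')) (k2 : Hom e2 (fobj K a'))
  (s1 : Hom (fobj pq e1) (fobj pp (fobj G e1)))
  (s2 : Hom (fobj pq e2) (fobj pp (fobj G e2))) :
  existT (fun e => Hom e (fobj K a')) e1 k1 = existT _ e2 k2 ->
  comp (fmap pq (eps e1)) s1 = idm _ ->
  comp (fmap pp (fmap G k1)) s1 = comp (fmap pp (eta a')) (fmap pq k1) ->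
  comp (fmap pq (eps e2)) s2 = idm _ ->
  comp (fmap pp (fmap G k2)) s2 = comp (fmap pp (eta a')) (fmap pq k2) ->
  existT (fun e => Hom (fobj pq e) (fobj pp (fobj G e))) e1 s1 = existT _ e2 s2.
Proof.
  intros H. pose proof (f_equal (@projT1 _ _) H) as E0. cbn [projT1] in E0. subst e2.
  apply inj_pair2 in H. subst k2. intros A1 B1 A2 B2. f_equal.
  assert (Hc : comp (fmap pq (eps (fobj K a'))) (comp (fmap pp (eta a')) (fmap pq k1))
               = comp (fmap pq k1) (idm _)).
  { rewrite <- comp_assoc, unit_section, comp_idl, comp_idr. reflexivity. }
  destruct (proj2 (counit_square_pullback e1 (fobj K a') k1) _ _ _ Hc) as [h [_ U]].
  transitivity h; [symmetry|]; apply U; split; assumption.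
Qed.

Lemma adjoint_pullback_objects (c : Cq) (s : Cart (codp B)) :
  fobj (Fcomp (Incl (cod B)) zeta_of_adjoint) c = fobj (Fcomp (Forget B) (Incl (codp B))) s ->
  exists! a : Cp, fobj K a = c /\ fobj Phi_of_adjoint a = s.
Proof.
  intros Hc. destruct s as [S T m sec ok]. simpl in Hc.
  pose proof (f_equal (@a_src _) Hc) as ES. simpl in ES. subst S.
  pose proof (f_equal (@a_tgt _) Hc) as ET. simpl in ET. subst T.
  apply arr_map_inj in Hc. subst m.
  assert (Hh : comp (fmap pq (eps c)) sec = fmap pq (idm c)).
  { exact (eq_trans ok (eq_sym (fmap_id _ _ pq c))). }
  (* the section lifts to [h : c -> K (G c)], whose K-lift is the sought object *)
  destruct (Cart_hom_cartesian q _ _ (eps c) c (idm c) sec Hh) as [h [[Eh Ph] Uh]].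
  destruct (hdisc (fobj G c) c h) as [[x f] [Hz Uz]]. cbn [projT1 projT2] in Hz.
  exists x. split.
  - pose proof (f_equal (@projT1 _ _) Hz) as Ex. cbn [projT1] in Ex. subst c.
    apply inj_pair2 in Hz. split; [reflexivity|].
    assert (Hf : f = eta x).
    { apply unit_unique. rewrite <- Eh. f_equal. exact Hz. }
    apply pointed_counit_eq. f_equal. rewrite <- Ph, <- Hz, Hf. reflexivity.
  - intros x' [H1 H2]. subst c.
    assert (Hk : h = fmap K (eta x')).
    { apply Uh. split.
      - exact (triangle_K x').
      - simpl in H2. unfold Phi_ob, pointed_counit in H2. apply parr_sec_inj in H2.
        exact H2. }
    assert (Z := Uz (existT _ x' (eta x'))). simpl in Z.
    rewrite Hk in Z. specialize (Z eq_refl).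
    exact (f_equal (@projT1 _ _) Z).
Qed.

Lemma adjoint_pullback_homs (a a' : Cp) (g : Hom (fobj K a) (fobj K a'))
  (t : Hom (fobj Phi_of_adjoint a) (fobj Phi_of_adjoint a')) :
  existT (fun xy : Arrow B * Arrow B => Hom (fst xy) (snd xy))
    (fobj (Fcomp (Incl (cod B)) zeta_of_adjoint) (fobj K a),
     fobj (Fcomp (Incl (cod B)) zeta_of_adjoint) (fobj K a'))
    (fmap (Fcomp (Incl (cod B)) zeta_of_adjoint) g)
  = existT (fun xy : Arrow B * Arrow B => Hom (fst xy) (snd xy))
    (fobj (Fcomp (Forget B) (Incl (codp B))) (fobj Phi_of_adjoint a),
     fobj (Fcomp (Forget B) (Incl (codp B))) (fobj Phi_of_adjoint a'))
    (fmap (Fcomp (Forget B) (Incl (codp B))) t) ->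
  exists! f : Hom a a', fmap K f = g /\ fmap Phi_of_adjoint f = t.
Proof.
  intros H. apply inj_pair2 in H.
  destruct t as [[[t1 t2] [tc ts]] tcart].
  apply (f_equal (@proj1_sig _ _)) in H. cbn in H.
  injection H as H1 H2. subst t1 t2.
  destruct (hdisc a' (fobj K a) g) as [[x f] [Hz Uz]]. cbn [projT1 projT2] in Hz.
  (* the domain x of the K-lift of g has the same image as a under K and Phi *)
  assert (Exa : x = a).
  { destruct (adjoint_pullback_objects (fobj K a) (fobj Phi_of_adjoint a) eq_refl)
      as [a0 [_ U0]].
    transitivity a0; [symmetry|]; apply U0; split; try reflexivity.
    - exact (f_equal (@projT1 _ _) Hz).
    - apply pointed_counit_eq.
      apply (counit_section_unique a' _ _ (fmap K f) g); try apply unit_section.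
      + exact Hz.
      + symmetry. apply unit_square_commutes.
      + symmetry. exact ts. }
  subst x. apply inj_pair2 in Hz.
  exists f. split.
  - split; [exact Hz|]. apply sig_eq_pi, sig_eq_pi.
    transitivity (fmap pp (fmap G (fmap K f)), fmap pq (fmap K f)); [reflexivity|].
    rewrite Hz. reflexivity.
  - intros f' [E1 _]. apply (discrete_fibration_faithful K hdisc). rewrite Hz, E1.
    reflexivity.
Qed.

Lemma adjoint_strict_pullback :
  exists (Phi : Functor Cp (Cart (codp B))) (zeta : Functor Cq (Cart (cod B))),
  fibred_functor (CartProj (Fcomp q chi)) (CartProj (codp B)) Phi /\
  fibred_functor (CartProj q) (CartProj (cod B)) zeta /\
  strict_pullback K Phi (Fcomp (Incl (cod B)) zeta) (Fcomp (Forget B) (Incl (codp B))).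
Proof.
  exists Phi_of_adjoint, zeta_of_adjoint. split; [|split].
  - split; [split; intros; reflexivity|]. intros. apply Cart_hom_cartesian.
  - split; [split; intros; reflexivity|]. intros. apply Cart_hom_cartesian.
  - split; [|split].
    + split; [intros; reflexivity|]. intros x y f.
      apply (f_equal (existT _ _)). apply sig_eq_pi. reflexivity.
    + exact adjoint_pullback_objects.
    + exact adjoint_pullback_homs.
Qed.

End AdjointToPullback.

(** * Transport along equalities of objects *)

(* Object equalities in [fibred_functor] and [strict_pullback] are propositional,
   so morphisms are compared through the identities [hom_of_eq]. *)
Definition hom_of_eq {C : Category} {a b : C} (E : a = b) : Hom a b :=
  match E in _ = b return Hom a b with eq_refl => idm a end.

Lemma hom_of_eq_id {C : Category} {a : C} (E : a = a) : hom_of_eq E = idm a.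
Proof. rewrite (proof_irrelevance _ E eq_refl). reflexivity. Qed.

Lemma hom_of_eq_idl {C : Category} {a d : C} (E : a = a) (r : Hom d a) :
  comp (hom_of_eq E) r = r.
Proof. rewrite hom_of_eq_id. apply comp_idl. Qed.

Lemma hom_of_eq_idr {C : Category} {a d : C} (E : a = a) (r : Hom a d) :
  comp r (hom_of_eq E) = r.
Proof. rewrite hom_of_eq_id. apply comp_idr. Qed.

Lemma comp_hom_of_eq {C : Category} {a b c : C} (E1 : a = b) (E2 : b = c) (E3 : a = c) :
  comp (hom_of_eq E2) (hom_of_eq E1) = hom_of_eq E3.
Proof. destruct E1, E2. rewrite (hom_of_eq_id E3). apply comp_idl. Qed.

Lemma comp_hom_of_eqA {C : Category} {a b c d : C} (E1 : a = b) (E2 : b = c) (E3 : a = c)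
  (r : Hom d a) :
  comp (hom_of_eq E2) (comp (hom_of_eq E1) r) = comp (hom_of_eq E3) r.
Proof. rewrite <- comp_assoc, (comp_hom_of_eq E1 E2 E3). reflexivity. Qed.

Lemma hom_of_eq_cancel {C : Category} {a b d : C} (E : a = b) (f g : Hom d a) :
  comp (hom_of_eq E) f = comp (hom_of_eq E) g -> f = g.
Proof. destruct E. simpl. rewrite !comp_idl. auto. Qed.

Lemma hom_of_eq_square_sym {C : Category} {S T A Z : C} (f : Hom A Z) (g : Hom S T)
  (E1 : S = A) (E2 : T = Z) (E1' : A = S) (E2' : Z = T) :
  comp f (hom_of_eq E1) = comp (hom_of_eq E2) g ->
  comp (hom_of_eq E2') f = comp g (hom_of_eq E1').
Proof. destruct E1, E2. rewrite !hom_of_eq_idl, !hom_of_eq_idr. auto. Qed.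

Lemma hom_of_eq_square_conj {C : Category} {a b a' b' s t : C} (f : Hom a b) (g : Hom a' b')
  (E1 : a = a') (E2 : b = b') (F1 : s = a) (F2 : b = t) (G1 : s = a') (G2 : b' = t) :
  comp (hom_of_eq E2) f = comp g (hom_of_eq E1) ->
  comp (hom_of_eq F2) (comp f (hom_of_eq F1)) = comp (hom_of_eq G2) (comp g (hom_of_eq G1)).
Proof.
  destruct E1, E2. rewrite hom_of_eq_idl, hom_of_eq_idr. intros ->.
  rewrite (proof_irrelevance _ F1 G1), (proof_irrelevance _ F2 G2). reflexivity.
Qed.

Lemma comp_eqA {C : Category} {a b c b' w : C} (f : Hom b c) (g : Hom a b) (h : Hom b' c)
  (k : Hom a b') (r : Hom w a) :
  comp f g = comp h k -> comp f (comp g r) = comp h (comp k r).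
Proof. intros H. rewrite <- !comp_assoc, H. reflexivity. Qed.

Lemma comp_idA {C : Category} {a b w : C} (f : Hom b a) (g : Hom a b) (r : Hom w a) :
  comp f g = idm a -> comp f (comp g r) = r.
Proof. intros H. rewrite <- comp_assoc, H. apply comp_idl. Qed.

Lemma existT_dom_hom_of_eq {C : Category} (T a a' : C) (f : Hom a T) (g : Hom a' T) :
  existT (fun J => Hom J T) a f = existT _ a' g ->
  forall E : a = a', f = comp g (hom_of_eq E).
Proof.
  intros H. pose proof (f_equal (@projT1 _ _) H) as E0. cbn [projT1] in E0. subst a'.
  apply inj_pair2 in H. subst g. intros E. rewrite hom_of_eq_idr. reflexivity.
Qed.

Lemma existT_hom_square {C : Category} (a b a' b' : C) (f : Hom a b) (g : Hom a' b') :
  existT (fun xy : C * C => Hom (fst xy) (snd xy)) (a, b) f = existT _ (a', b') g ->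
  forall (E1 : a = a') (E2 : b = b'), comp (hom_of_eq E2) f = comp g (hom_of_eq E1).
Proof.
  intros H. pose proof (f_equal (@projT1 _ _) H) as E0. cbn [projT1] in E0.
  injection E0 as Ea Eb. subst a' b'.
  apply inj_pair2 in H. subst g. intros E1 E2.
  rewrite hom_of_eq_idl, hom_of_eq_idr. reflexivity.
Qed.

Lemma arr_eta {B : Category} (a : arr_ob B) :
  a = Build_arr_ob B (a_src a) (a_tgt a) (a_map a).
Proof. destruct a; reflexivity. Qed.

Lemma arr_eq_square {B : Category} (a : arr_ob B) S T (m : Hom S T) :
  a = Build_arr_ob B S T m ->
  forall (E1 : S = a_src a) (E2 : T = a_tgt a),
    comp (a_map a) (hom_of_eq E1) = comp (hom_of_eq E2) m.
Proof.
  intros H. subst a. simpl. intros E1 E2. rewrite hom_of_eq_idl, hom_of_eq_idr.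
  reflexivity.
Qed.

Lemma parr_eq_sec {B : Category} (a : parr_ob B) S T (m : Hom S T) s ok :
  a = Build_parr_ob B S T m s ok ->
  forall (E1 : S = pa_src a) (E2 : T = pa_tgt a),
    comp (pa_sec a) (hom_of_eq E2) = comp (hom_of_eq E1) s.
Proof.
  intros H. subst a. simpl. intros E1 E2. rewrite hom_of_eq_idl, hom_of_eq_idr.
  reflexivity.
Qed.

Lemma arr_hom_existT_fst {B : Category} (a b a' b' : arr_ob B)
  (f : arr_hom a b) (g : arr_hom a' b') :
  existT (fun xy : Arrow B * Arrow B => Hom (fst xy) (snd xy)) (a, b) f
  = existT (fun xy : Arrow B * Arrow B => Hom (fst xy) (snd xy)) (a', b') g ->
  forall (E1 : a_src a' = a_src a) (E3 : a_src b' = a_src b),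
  comp (fst (proj1_sig f)) (hom_of_eq E1) = comp (hom_of_eq E3) (fst (proj1_sig g)).
Proof.
  intros H. pose proof (f_equal (@projT1 _ _) H) as E0. cbn [projT1] in E0.
  injection E0 as Ea Eb. subst a' b'.
  apply inj_pair2 in H. subst g. intros. rewrite hom_of_eq_idl, hom_of_eq_idr.
  reflexivity.
Qed.

Lemma arr_hom_existT_of_eq {B : Category} (a b a' b' : arr_ob B) (Ea : a = a') (Eb : b = b')
  (f : arr_hom a b) (g : arr_hom a' b')
  (E1 : a_src a = a_src a') (E2 : a_tgt a = a_tgt a')
  (E3 : a_src b = a_src b') (E4 : a_tgt b = a_tgt b') :
  fst (proj1_sig g) = comp (hom_of_eq E3) (comp (fst (proj1_sig f)) (hom_of_eq (eq_sym E1))) ->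
  snd (proj1_sig g) = comp (hom_of_eq E4) (comp (snd (proj1_sig f)) (hom_of_eq (eq_sym E2))) ->
  existT (fun xy : Arrow B * Arrow B => Hom (fst xy) (snd xy)) (a, b) f
  = existT (fun xy : Arrow B * Arrow B => Hom (fst xy) (snd xy)) (a', b') g.
Proof.
  subst a' b'. rewrite !hom_of_eq_idl, !hom_of_eq_idr. intros H1 H2.
  f_equal. apply sig_eq_pi. destruct f as [[f1 f2] Hf], g as [[g1 g2] Hg]. simpl in *.
  subst. reflexivity.
Qed.

Lemma is_pullback_hom_of_eq {B : Category} {A I A' I' A2 I2 A2' I2' : B}
  (m : Hom A I) (m' : Hom A' I') (top : Hom A A') (bot : Hom I I')
  (m2 : Hom A2 I2) (m2' : Hom A2' I2')
  (E1 : A = A2) (E2 : I = I2) (E3 : A' = A2') (E4 : I' = I2') :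
  is_pullback top m m' bot ->
  comp (hom_of_eq E2) m = comp m2 (hom_of_eq E1) ->
  comp (hom_of_eq E4) m' = comp m2' (hom_of_eq E3) ->
  is_pullback (comp (hom_of_eq E3) (comp top (hom_of_eq (eq_sym E1)))) m2 m2'
              (comp (hom_of_eq E4) (comp bot (hom_of_eq (eq_sym E2)))).
Proof.
  destruct E1, E2, E3, E4. simpl. rewrite !comp_idl, !comp_idr.
  intros Pb H1 H2. subst. exact Pb.
Qed.

Lemma is_pullback_hom_ext {B : Category} {P X Y Z W : B}
  (p1 : Hom P X) (p2 : Hom P Y) (f : Hom X Z) (g : Hom Y Z) (h h' : Hom W P) :
  is_pullback p1 p2 f g -> comp p1 h = comp p1 h' -> comp p2 h = comp p2 h' -> h = h'.
Proof.
  intros [Hc U] H1 H2.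
  destruct (U W (comp p1 h) (comp p2 h)) as [k [_ Uk]].
  { rewrite <- !comp_assoc, Hc. reflexivity. }
  transitivity k; [symmetry|]; apply Uk; split; auto.
Qed.

(** * From a strict pullback to a right adjoint *)

Section PullbackToAdjoint.
Context (B E D : Category) (q : Functor E B) (chi : Functor D E)
  (hpres : preserves_cartesian q chi).
Local Notation Cp := (Cart (Fcomp q chi)).
Local Notation Cq := (Cart q).
Local Notation K := (CartF hpres).
Local Notation pp := (CartProj (Fcomp q chi)).
Local Notation pq := (CartProj q).
Context (hq : is_fibration q) (hdisc : discrete_fibration K)
  (Phi : Functor Cp (Cart (codp B))) (zeta : Functor Cq (Cart (cod B)))
  (HPf : fibred_functor pp (CartProj (codp B)) Phi)
  (HZf : fibred_functor pq (CartProj (cod B)) zeta)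
  (SP : strict_pullback K Phi (Fcomp (Incl (cod B)) zeta)
          (Fcomp (Forget B) (Incl (codp B)))).

Local Notation Zo e := (fobj zeta e : arr_ob B).
Local Notation Zh f := (proj1_sig (proj1_sig (fmap zeta f))).
Local Notation Po d := (fobj Phi d : parr_ob B).
Local Notation Ph f := (proj1_sig (proj1_sig (fmap Phi f))).

Lemma zeta_tgt (e : Cq) : a_tgt (Zo e) = fobj pq e.
Proof. exact (proj1 (proj1 HZf) e). Qed.

Lemma zeta_tgt_hom (e e' : Cq) (f : Hom e e')
  (E1 : fobj pq e = a_tgt (Zo e)) (E2 : fobj pq e' = a_tgt (Zo e')) :
  comp (hom_of_eq E2) (fmap pq f) = comp (snd (Zh f)) (hom_of_eq E1).
Proof. apply existT_hom_square. exact (eq_sym (proj2 (proj1 HZf) e e' f)). Qed.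

Lemma Phi_tgt (d : Cp) : pa_tgt (Po d) = fobj pp d.
Proof. exact (proj1 (proj1 HPf) d). Qed.

Lemma Phi_tgt_hom (d d' : Cp) (f : Hom d d')
  (E1 : fobj pp d = pa_tgt (Po d)) (E2 : fobj pp d' = pa_tgt (Po d')) :
  comp (hom_of_eq E2) (fmap pp f) = comp (snd (Ph f)) (hom_of_eq E1).
Proof. apply existT_hom_square. exact (eq_sym (proj2 (proj1 HPf) d d' f)). Qed.

Lemma zeta_K_ob (d : Cp) :
  Zo (fobj K d) = Build_arr_ob B (pa_src (Po d)) (pa_tgt (Po d)) (pa_map (Po d)).
Proof. exact (proj1 (proj1 SP) d). Qed.

Lemma zeta_K_src (d : Cp) : a_src (Zo (fobj K d)) = pa_src (Po d).
Proof. exact (f_equal (@a_src B) (zeta_K_ob d)). Qed.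

Lemma zeta_K_tgt (d : Cp) : a_tgt (Zo (fobj K d)) = pa_tgt (Po d).
Proof. exact (f_equal (@a_tgt B) (zeta_K_ob d)). Qed.

Lemma zeta_K_hom_fst (x y : Cp) (f : Hom x y)
  (E1 : pa_src (Po x) = a_src (Zo (fobj K x))) (E2 : pa_src (Po y) = a_src (Zo (fobj K y))) :
  comp (fst (Zh (fmap K f))) (hom_of_eq E1) = comp (hom_of_eq E2) (fst (Ph f)).
Proof. exact (arr_hom_existT_fst _ _ _ _ _ _ (proj2 (proj1 SP) x y f) E1 E2). Qed.

Lemma zeta_fst_comp (e1 e2 e3 : Cq) (a : Hom e2 e3) (b : Hom e1 e2) (c : Hom e1 e3) :
  comp a b = c -> fst (Zh c) = comp (fst (Zh a)) (fst (Zh b)).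
Proof. intros <-. rewrite fmap_comp. reflexivity. Qed.

Definition zeta_section (x : Cp) : Hom (fobj pp x) (a_src (Zo (fobj K x))) :=
  comp (hom_of_eq (eq_sym (zeta_K_src x)))
       (comp (pa_sec (Po x)) (hom_of_eq (eq_sym (Phi_tgt x)))).

Lemma zeta_section_ok (x : Cp) :
  comp (a_map (Zo (fobj K x))) (zeta_section x) = hom_of_eq (eq_sym (zeta_tgt (fobj K x))).
Proof.
  unfold zeta_section.
  rewrite (comp_eqA _ _ _ _ _ (arr_eq_square _ _ _ _ (zeta_K_ob x) _
             (eq_sym (zeta_K_tgt x)))).
  rewrite (comp_idA _ _ _ (pa_sec_ok _ _)). apply comp_hom_of_eq.
Qed.

Lemma zeta_K_section_compat (x y : Cp) (f : Hom x y) :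
  comp (fst (Zh (fmap K f))) (zeta_section x) = comp (zeta_section y) (fmap pp f).
Proof.
  unfold zeta_section.
  rewrite (comp_eqA _ _ _ _ _ (zeta_K_hom_fst x y f _
             (eq_sym (zeta_K_src y)))).
  rewrite <- (comp_eqA _ _ _ _ _ (proj2 (proj2_sig (proj1_sig (fmap Phi f))))).
  rewrite <- (Phi_tgt_hom x y f _ (eq_sym (Phi_tgt y))), !comp_assoc. reflexivity.
Qed.

Lemma zeta_section_secA (x : Cp) (E1 : a_src (Zo (fobj K x)) = pa_src (Po x))
  (E2 : fobj pp x = pa_tgt (Po x)) {w : B} (r : Hom w (fobj pp x)) :
  comp (hom_of_eq E1) (comp (zeta_section x) r) = comp (pa_sec (Po x)) (comp (hom_of_eq E2) r).
Proof.
  unfold zeta_section. rewrite !comp_assoc, (comp_hom_of_eqA _ _ eq_refl), comp_idl.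
  rewrite (proof_irrelevance _ E2 (eq_sym (Phi_tgt x))). reflexivity.
Qed.

Lemma zeta_section_sec (x : Cp) (E1 : a_src (Zo (fobj K x)) = pa_src (Po x)) :
  comp (hom_of_eq E1) (comp (zeta_section x) (hom_of_eq (Phi_tgt x))) = pa_sec (Po x).
Proof.
  rewrite (zeta_section_secA x E1 (eq_sym (Phi_tgt x))), (comp_hom_of_eq _ _ eq_refl).
  apply comp_idr.
Qed.

Lemma zeta_K_map_l (x : Cp) :
  comp (a_map (Zo (fobj K x))) (hom_of_eq (eq_sym (zeta_K_src x)))
  = comp (hom_of_eq (eq_sym (zeta_K_tgt x))) (pa_map (Po x)).
Proof. exact (arr_eq_square _ _ _ _ (zeta_K_ob x) _ _). Qed.

Lemma zeta_K_map_r (x : Cp) :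
  comp (hom_of_eq (zeta_K_tgt x)) (a_map (Zo (fobj K x)))
  = comp (pa_map (Po x)) (hom_of_eq (zeta_K_src x)).
Proof. exact (hom_of_eq_square_sym _ _ _ _ _ _ (zeta_K_map_l x)). Qed.

Section LiftAlongK.
Variables (x d : Cp) (g : Hom (fobj K x) (fobj K d)).

Definition zeta_K_fst : Hom (pa_src (Po x)) (pa_src (Po d)) :=
  comp (hom_of_eq (zeta_K_src d)) (comp (fst (Zh g)) (hom_of_eq (eq_sym (zeta_K_src x)))).

Definition zeta_K_snd : Hom (pa_tgt (Po x)) (pa_tgt (Po d)) :=
  comp (hom_of_eq (zeta_K_tgt d)) (comp (snd (Zh g)) (hom_of_eq (eq_sym (zeta_K_tgt x)))).

Lemma zeta_K_hom_comm : comp (pa_map (Po d)) zeta_K_fst = comp zeta_K_snd (pa_map (Po x)).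
Proof.
  unfold zeta_K_fst, zeta_K_snd.
  rewrite <- (comp_eqA _ _ _ _ _ (zeta_K_map_r d)),
    (comp_eqA _ _ _ _ _ (proj2_sig (proj1_sig (fmap zeta g)))), zeta_K_map_l, !comp_assoc.
  reflexivity.
Qed.

Lemma zeta_K_hom_sec :
  comp (fst (Zh g)) (zeta_section x) = comp (zeta_section d) (fmap pq g) ->
  comp (pa_sec (Po d)) zeta_K_snd = comp zeta_K_fst (pa_sec (Po x)).
Proof.
  intros compat. unfold zeta_K_fst.
  rewrite <- (zeta_section_sec x (zeta_K_src x)), !comp_assoc,
    (comp_hom_of_eqA _ _ eq_refl), comp_idl,
    (comp_eqA _ _ _ _ _ compat), (zeta_section_secA d (zeta_K_src d) (eq_sym (Phi_tgt d))).
  unfold zeta_K_snd. f_equal. symmetry.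
  apply hom_of_eq_square_conj with (E1 := eq_sym (zeta_tgt (fobj K x)))
                                   (E2 := eq_sym (zeta_tgt (fobj K d))).
  apply zeta_tgt_hom.
Qed.

Lemma zeta_K_hom_pullback : is_pullback zeta_K_fst (pa_map (Po x)) (pa_map (Po d)) zeta_K_snd.
Proof.
  apply (is_pullback_hom_of_eq (a_map (Zo (fobj K x))) (a_map (Zo (fobj K d)))
           (fst (Zh g)) (snd (Zh g))).
  - apply cod_cartesian_iff_pullback, (proj2_sig (fmap zeta g)).
  - apply zeta_K_map_r.
  - apply zeta_K_map_r.
Qed.

(* The strict pullback lifts [g] together with [zeta g], viewed as a map of
   pointed arrows [Phi x -> Phi d]. *)
Lemma K_hom_lift :
  comp (fst (Zh g)) (zeta_section x) = comp (zeta_section d) (fmap pq g) ->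
  exists f : Hom x d, fmap K f = g.
Proof.
  intros compat.
  set (t := exist _ (zeta_K_fst, zeta_K_snd) (conj zeta_K_hom_comm (zeta_K_hom_sec compat))
              : @parr_hom B (Po x) (Po d)).
  destruct (proj2 (proj2 SP) x d g
              (exist _ t (codp_cartesian_of_pullback _ _ t zeta_K_hom_pullback)))
    as [f [[Ef _] _]].
  - refine (arr_hom_existT_of_eq (Zo (fobj K x)) (Zo (fobj K d)) _ _
              (zeta_K_ob x) (zeta_K_ob d) (proj1_sig (fmap zeta g)) (fmap (Forget B) t)
              (zeta_K_src x) (zeta_K_tgt x) (zeta_K_src d) (zeta_K_tgt d) _ _);
      reflexivity.
  - exists f. exact Ef.
Qed.
End LiftAlongK.

Lemma zeta_section_of_eq (d : Cp) (s : Hom (fobj pp d) (a_src (Zo (fobj K d)))) ok :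
  Po d = Build_parr_ob B _ _ (a_map (Zo (fobj K d)))
                       (comp s (hom_of_eq (zeta_tgt (fobj K d)))) ok ->
  zeta_section d = s.
Proof.
  intros Hd. unfold zeta_section.
  rewrite <- (@comp_hom_of_eq B (fobj pp d) _ _ (eq_sym (zeta_tgt (fobj K d))) (zeta_K_tgt d)
                (eq_sym (Phi_tgt d))).
  rewrite (comp_eqA _ _ _ _ _ (parr_eq_sec _ _ _ _ _ _ Hd (zeta_K_src d)
                                 (zeta_K_tgt d))).
  rewrite (comp_hom_of_eqA _ _ eq_refl), comp_idl, comp_assoc,
    (comp_hom_of_eq _ _ eq_refl).
  apply comp_idr.
Qed.

(* [eps] plays the counit at [e]: it projects to [zeta e], and the section of
   [Phi d] is the diagonal of the pullback square [zeta eps]. *)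
Section Counit.
Variables (e : Cq) (d : Cp) (eps : Hom (fobj K d) e)
  (E1 : fobj pp d = a_src (Zo e))
  (eps_zeta : fmap pq eps
              = comp (hom_of_eq (zeta_tgt e)) (comp (a_map (Zo e)) (hom_of_eq E1)))
  (eps_section : comp (fst (Zh eps)) (zeta_section d) = hom_of_eq E1).

Lemma counit_universal (x : Cp) (g : Hom (fobj K x) e) :
  exists! f : Hom x d, comp eps (fmap K f) = g.
Proof.
  set (w := comp (hom_of_eq (eq_sym E1)) (comp (fst (Zh g)) (zeta_section x))).
  assert (Hw : comp (fmap pq eps) w = fmap pq g).
  { rewrite eps_zeta. unfold w. rewrite !comp_assoc.
    rewrite (comp_hom_of_eqA _ _ eq_refl), comp_idl.
    rewrite (comp_eqA _ _ _ _ _ (proj2_sig (proj1_sig (fmap zeta g)))), zeta_section_ok.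
    apply (hom_of_eq_cancel (eq_sym (zeta_tgt e))).
    rewrite (comp_hom_of_eqA _ _ eq_refl), comp_idl.
    symmetry. apply zeta_tgt_hom. }
  destruct (Cart_hom_cartesian q _ _ eps (fobj K x) g w Hw) as [g' [[Eg' Pg'] Ug']].
  assert (w_unique : forall f : Hom x d, comp eps (fmap K f) = g -> fmap pq (fmap K f) = w).
  { intros f Hf. unfold w. rewrite <- Hf, (zeta_fst_comp _ _ _ _ _ _ eq_refl),
      !comp_assoc, zeta_K_section_compat, <- (comp_assoc _ _ _ _ _ (fst (Zh eps))),
      eps_section, (comp_hom_of_eqA _ _ eq_refl).
    symmetry. apply comp_idl. }
  (* [zeta g'] respects the sections: compare both sides on the pullback [zeta eps] *)
  assert (compat : comp (fst (Zh g')) (zeta_section x) = comp (zeta_section d) (fmap pq g')).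
  { apply (is_pullback_hom_ext (fst (Zh eps)) (a_map (Zo (fobj K d))) (a_map (Zo e))
             (snd (Zh eps))).
    - apply cod_cartesian_iff_pullback, (proj2_sig (fmap zeta eps)).
    - rewrite <- comp_assoc, <- (zeta_fst_comp _ _ _ _ _ _ Eg'),
        <- comp_assoc, eps_section, Pg'.
      unfold w. rewrite (comp_hom_of_eqA _ _ eq_refl). symmetry. apply comp_idl.
    - rewrite (comp_eqA _ _ _ _ _ (proj2_sig (proj1_sig (fmap zeta g')))), zeta_section_ok,
        <- comp_assoc, zeta_section_ok.
      symmetry. apply zeta_tgt_hom. }
  destruct (K_hom_lift x d g' compat) as [f Ef].
  exists f. split.
  - rewrite Ef. exact Eg'.
  - intros f' Hf'. apply (discrete_fibration_faithful K hdisc).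
    rewrite Ef. apply Ug'. split; [exact Hf' | exact (w_unique f' Hf')].
Qed.
End Counit.

Lemma counit_exists (e : Cq) :
  exists (d : Cp) (eps : Hom (fobj K d) e),
    forall (x : Cp) (g : Hom (fobj K x) e), exists! f : Hom x d, comp eps (fmap K f) = g.
Proof.
  destruct (fibration_Cart_lift q hq e (a_src (Zo e))
              (comp (hom_of_eq (zeta_tgt e)) (a_map (Zo e)))) as [e1 [eps H1]].
  pose proof (f_equal (@projT1 _ _) H1) as E1. cbn [projT1] in E1.
  pose proof (existT_dom_hom_of_eq _ _ _ _ _ H1 E1) as Heps. rewrite comp_assoc in Heps.
  assert (Hsq : comp (a_map (Zo e)) (hom_of_eq E1)
                = comp (snd (Zh eps)) (hom_of_eq (eq_sym (zeta_tgt e1)))).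
  { rewrite <- (zeta_tgt_hom _ _ eps _ (eq_sym (zeta_tgt e))), Heps,
      (comp_hom_of_eqA _ _ eq_refl).
    symmetry. apply comp_idl. }
  (* the diagonal of the pullback square [zeta eps] is a section of [zeta e1] *)
  destruct (proj2 (proj1 (cod_cartesian_iff_pullback _ _ _) (proj2_sig (fmap zeta eps)))
              _ _ _ Hsq) as [s [[Hs1 Hs2] _]].
  assert (ok : comp (a_map (Zo e1)) (comp s (hom_of_eq (zeta_tgt e1))) = idm _).
  { rewrite <- comp_assoc, Hs2. apply (comp_hom_of_eq _ _ eq_refl). }
  destruct (proj1 (proj2 SP) e1 (Build_parr_ob B _ _ (a_map (Zo e1)) _ ok) (arr_eta _))
    as [d [[Hd1 Hd2] _]].
  subst e1.
  exists d, eps. apply (counit_universal e d eps E1 Heps).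
  rewrite (zeta_section_of_eq d s ok Hd2). exact Hs1.
Qed.

Lemma strict_pullback_has_right_adjoint : has_right_adjoint K.
Proof. exact (has_right_adjoint_of_couniversal K counit_exists). Qed.
End PullbackToAdjoint.

Theorem mainTheorem13 (B E D : Category) (q : Functor E B) (chi : Functor D E)
  (hB : finitely_complete B)
  (hq : is_fibration q)
  (hp : is_fibration (Fcomp q chi))
  (hpres : preserves_cartesian q chi)
  (hdisc : discrete_fibration (CartF hpres)) :
  has_right_adjoint (CartF hpres) <->
  exists (Phi : Functor (Cart (Fcomp q chi)) (Cart (codp B)))
         (zeta : Functor (Cart q) (Cart (cod B))),
    fibred_functor (CartProj (Fcomp q chi)) (CartProj (codp B)) Phi /\
    fibred_functor (CartProj q) (CartProj (cod B)) zeta /\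
    strict_pullback (CartF hpres) Phi
                    (Fcomp (Incl (cod B)) zeta)
                    (Fcomp (Forget B) (Incl (codp B))).
Proof.
  split.
  - intros [G [eta [eps [eta_nat [eps_nat [triangle_K triangle_G]]]]]].
    exact (adjoint_strict_pullback B E D q chi hpres hp hdisc G eta eps
             eta_nat eps_nat triangle_K triangle_G).
  - intros [Phi [zeta [HPhi [Hzeta SP]]]].
    exact (strict_pullback_has_right_adjoint B E D q chi hpres hq hdisc Phi zeta
             HPhi Hzeta SP).
Qed.
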